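(* Let $\mathcal H=\mathbb C^5$ with orthonormal basis $\{|i\rangle\}_{i=0}^4$, $|\pm\rangle=(|0\rangle\pm|1\rangle)/\sqrt2$, and $a\in(0,1)$. Define $E_1=|2\rangle\langle2|+a|0\rangle\langle0|+(1-a)|+\rangle\langle+|$, $E_2=|3\rangle\langle3|+a|1\rangle\langle1|$, $E_3=|4\rangle\langle4|+(1-a)|-\rangle\langle-|$. Then $\{E_1,E_2,E_3\}$ is a non-commutative POVM (e.g. $E_2E_3\neq E_3E_2$), yet each $E_k$ is a fixed point of the Heisenberg-picture entanglement breaking channel $\Lambda^*(A)=\sum_{z=1}^3\mathrm{tr}[A\,|z+1\rangle\langle z+1|]E_z$; hence $\{E_k\}$ does not allow for a proof of contextuality of quantum theory.
   Context: A set of observables $\mathcal A$ does not allow for a proof of contextuality of quantum theory if there exist a POVM $\{G_\lambda\}$ and states $\{\sigma_\lambda\}$ (finite index set) with $A_k=\sum_\lambda\mathrm{tr}[\sigma_\lambda A_k]G_\lambda$ for all $\{A_k\}\in\mathcal A$ and all $k$. *)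

From HB Require Import structures.
From mathcomp Require Import all_boot all_order all_algebra.
From mathcomp Require Import complex.
From mathcomp Require Import reals.
Set Implicit Arguments. Unset Strict Implicit. Unset Printing Implicit Defensive.
Import Order.TTheory GRing.Theory Num.Theory.
Local Open Scope ring_scope.
Local Open Scope complex_scope.

Section QDefs.
Context {C : numClosedFieldType}.

Definition adj {m n} (A : 'M[C]_(m, n)) : 'M[C]_(n, m) := map_mx Num.conj (A^T).

Definition psd {d} (A : 'M[C]_d) : Prop :=
  adj A = A /\ forall v : 'cV[C]_d, 0 <= (adj v *m A *m v) 0 0.

Definition POVM {d} {I : finType} (E : I -> 'M[C]_d) : Prop :=
  (forall i, psd (E i)) /\ \sum_(i : I) E i = 1%:M.

Definition qstate {d} (s : 'M[C]_d) : Prop := psd s /\ \tr s = 1.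

(* A set of observables (indexed by J, the j-th being a POVM {A j k}_k with
   outcomes in K j) does NOT allow for a proof of contextuality iff there are
   a POVM {G_l} and states {s_l} with a finite index set such that
   A_k = sum_l tr[s_l A_k] G_l for every observable and every outcome k. *)
Definition no_contextuality_proof {d} {J : Type} (K : J -> finType)
    (A : forall j, K j -> 'M[C]_d) : Prop :=
  exists (L : nat) (G : 'I_L -> 'M[C]_d) (s : 'I_L -> 'M[C]_d),
    POVM G /\ (forall l, qstate (s l)) /\
    forall j (k : K j), A j k = \sum_(l < L) \tr (s l *m A j k) *: G l.

Definition ket {d} (i : 'I_d) : 'cV[C]_d := delta_mx i 0.
Definition proj {d} (v : 'cV[C]_d) : 'M[C]_d := v *m adj v.

End QDefs.

Section Example.
Variable R : realType.
Local Notation C := (complex R : numClosedFieldType).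

Definition k5 (i : nat) : 'cV[C]_5 := ket (inord i : 'I_5).
Definition ketp : 'cV[C]_5 := (Num.sqrt (2 : R))^-1%:C *: (k5 0 + k5 1).
Definition ketm : 'cV[C]_5 := (Num.sqrt (2 : R))^-1%:C *: (k5 0 - k5 1).

Definition E1 (a : R) : 'M[C]_5 :=
  proj (k5 2) + a%:C *: proj (k5 0) + (1 - a)%:C *: proj ketp.
Definition E2 (a : R) : 'M[C]_5 := proj (k5 3) + a%:C *: proj (k5 1).
Definition E3 (a : R) : 'M[C]_5 := proj (k5 4) + (1 - a)%:C *: proj ketm.

(* E_k indexed by 'I_3: index z (0,1,2) stands for E_{z+1} *)
Definition Efam (a : R) (z : 'I_3) : 'M[C]_5 :=
  if val z == 0%N then E1 a else if val z == 1%N then E2 a else E3 a.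

Definition LambdaH (a : R) (A : 'M[C]_5) : 'M[C]_5 :=
  \sum_(z < 3) \tr (A *m proj (k5 (z.+2))) *: Efam a z.
End Example.

From HB Require Import structures.
From mathcomp Require Import all_boot all_order all_algebra.
From mathcomp Require Import complex reals ring.
Import Order.TTheory GRing.Theory Num.Theory.
Local Open Scope ring_scope.

(* Each E_z is the projector onto |z+2> plus an operator supported on
   span{|0>, |1>}, so tr[E_w |z+2><z+2|] is the Kronecker delta and the
   measure-and-prepare channel with POVM {E_z} and states |z+2><z+2| fixes
   every E_z; this fixed-point identity is exactly the representation that
   rules out a contextuality proof.  Completeness of the POVM comes from
   |+><+| + |-><-| = |0><0| + |1><1|. *)

Section Dirac.
Variable C : numClosedFieldType.
Implicit Types (x : C).

Lemma adjK m n (A : 'M[C]_(m, n)) : adj (adj A) = A.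
Proof. by apply/matrixP=> i j; rewrite !mxE conjCK. Qed.

Lemma adjM m n p (A : 'M[C]_(m, n)) (B : 'M[C]_(n, p)) :
  adj (A *m B) = adj B *m adj A.
Proof. by rewrite /adj trmx_mul map_mxM. Qed.

Lemma adjD m n (A B : 'M[C]_(m, n)) : adj (A + B) = adj A + adj B.
Proof. by apply/matrixP=> i j; rewrite !mxE rmorphD. Qed.

Lemma adjN m n (A : 'M[C]_(m, n)) : adj (- A) = - adj A.
Proof. by apply/matrixP=> i j; rewrite !mxE rmorphN. Qed.

Lemma adjZ m n x (A : 'M[C]_(m, n)) : adj (x *: A) = x^* *: adj A.
Proof. by apply/matrixP=> i j; rewrite !mxE rmorphM. Qed.

Lemma adj_ket d (i : 'I_d) : adj (ket i) = delta_mx 0 i :> 'rV[C]_d.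
Proof. by apply/matrixP=> k l; rewrite /adj /ket !mxE rmorph_nat andbC. Qed.

Lemma proj_ket d (i : 'I_d) : proj (ket i) = delta_mx i i :> 'M[C]_d.
Proof. by rewrite /proj adj_ket mul_delta_mx. Qed.

Lemma sum_proj_ket d : \sum_(i < d) proj (ket i) = 1%:M :> 'M[C]_d.
Proof.
by rewrite (scalar_mx_sum_delta d 1); apply: eq_bigr => i _; rewrite proj_ket scale1r.
Qed.

Lemma projE d (v : 'cV[C]_d) : proj v = \matrix_(i, j) (v i 0 * (v j 0)^*).
Proof. by apply/matrixP=> i j; rewrite /proj /adj !mxE big_ord1 !mxE. Qed.

Lemma projZ d x (v : 'cV[C]_d) : proj (x *: v) = (x * x^*) *: proj v.
Proof. by rewrite /proj adjZ -scalemxAr -scalemxAl scalerA mulrC. Qed.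

Lemma projZ_ge0 d x (v : 'cV[C]_d) : 0 <= x -> proj (x *: v) = x ^+ 2 *: proj v.
Proof. by move=> x_ge0; rewrite projZ conj_Creal ?ger0_real // expr2. Qed.

Lemma projDB d (u v : 'cV[C]_d) : proj (u + v) + proj (u - v) = (proj u + proj v) *+ 2.
Proof.
rewrite /proj !adjD adjN !(mulmxDl, mulmxDr) !(mulNmx, mulmxN).
by rewrite addrACA [_ + (_ - _)]addrACA [_ + (- _ + _)]addrACA !subrr addr0 add0r mulrnDl !mulr2n opprK.
Qed.

Lemma psd_proj d (v : 'cV[C]_d) : psd (proj v).
Proof.
split; first by rewrite /proj adjM adjK.
move=> w; rewrite /proj !mulmxA -(mulmxA (adj w *m v)) mxE big_ord1.
have -> : (adj v *m w) 0 0 = ((adj w *m v) 0 0)^*.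
  rewrite !mxE rmorph_sum; apply: eq_bigr => k _; by rewrite /adj !mxE rmorphM /= conjCK mulrC.
exact: mul_conjC_ge0.
Qed.

Lemma psdD d (A B : 'M[C]_d) : psd A -> psd B -> psd (A + B).
Proof.
move=> [hA fA] [hB fB]; split; first by rewrite adjD hA hB.
by move=> v; rewrite mulmxDr mulmxDl mxE addr_ge0.
Qed.

Lemma psdZ d x (A : 'M[C]_d) : 0 <= x -> psd A -> psd (x *: A).
Proof.
move=> x_ge0 [hA fA]; split; first by rewrite adjZ hA conj_Creal ?ger0_real.
by move=> v; rewrite -scalemxAr -scalemxAl mxE mulr_ge0.
Qed.

Lemma mxtrace_mul_proj_ket d (A : 'M[C]_d) i : \tr (A *m proj (ket i)) = A i i.
Proof.
rewrite proj_ket /mxtrace (bigD1 i) //= big1 => [|j /negbTE ji].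
  by rewrite addr0 mxE (bigD1 i) //= big1 => [|k /negbTE ki]; rewrite !mxE ?ki ?eqxx ?mulr0 // mulr1 addr0.
by rewrite mxE big1 // => k _; rewrite mxE ji andbF mulr0.
Qed.

Lemma qstate_proj_ket d (i : 'I_d) : qstate (proj (ket i) : 'M[C]_d).
Proof. by split; [exact: psd_proj | rewrite -[proj _]mul1mx mxtrace_mul_proj_ket mxE eqxx]. Qed.

End Dirac.

Section Example.
Local Open Scope complex_scope.
Variable R : realType.
Local Notation C := (R[i] : numClosedFieldType).
Local Notation s := ((Num.sqrt (2 : R))^-1%:C : C).
Variable a : R.
Hypotheses (a_gt0 : 0 < a) (a_lt1 : a < 1).

Lemma proj_ketp_ketm : proj (ketp R) + proj (ketm R) = proj (k5 R 0) + proj (k5 R 1).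
Proof.
have s_ge0 : 0 <= s by rewrite lecR invr_ge0 sqrtr_ge0.
have s2 : s ^+ 2 = 2^-1.
  by rewrite -rmorphXn /= exprVn sqr_sqrtr ?ler0n // fmorphV /= rmorph_nat.
rewrite /ketp /ketm !projZ_ge0 // s2 -scalerDr projDB -scalerMnr scalerMnl -mulr_natr.
by rewrite mulVf ?pnatr_eq0 // scale1r.
Qed.

Lemma sum_proj_k5 :
  proj (k5 R 0) + (proj (k5 R 1) + (proj (k5 R 2) + (proj (k5 R 3) + proj (k5 R 4)))) = 1%:M.
Proof.
rewrite -(sum_proj_ket _ 5) (eq_bigr (fun i : 'I_5 => proj (k5 R i))) => [|i _].
  by rewrite -(big_mkord xpredT (fun i => proj (k5 R i))) unlock /= [proj (k5 R 4) + 0]addr0.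
by rewrite /k5 inord_val.
Qed.

Lemma sum_Efam : \sum_z Efam a z = 1%:M.
Proof.
rewrite 2!big_ord_recl big_ord1 /Efam /= /E1 /E2 /E3 -sum_proj_k5.
have := proj_ketp_ketm; have : a%:C + (1 - a)%:C = 1 :> C by rewrite -rmorphD /= addrC subrK.
move: (proj (k5 R 0)) (proj (k5 R 1)) (proj (ketp R)) (proj (ketm R)) => P0 P1 Pp Pm hab hPpm.
rewrite -[_ + _ *: Pp]addrA [(_ + _ *: P1) + _]addrACA [_ + (_ + _ *: Pp) + _]addrACA.
rewrite [(_ + _ *: Pp) + _]addrACA -!scalerDr hPpm -scalerDl hab scale1r.
by rewrite addrC -addrA.
Qed.

Lemma psd_Efam z : psd (Efam a z).
Proof.
have : 0 <= a%:C :> C by rewrite lecR ltW.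
have : 0 <= (1 - a)%:C :> C by rewrite lecR subr_ge0 ltW.
rewrite /Efam; case: ifP => _; [|case: ifP => _]; rewrite /E1 /E2 /E3 => b_ge0 a_ge0;
  by repeat first [exact: psd_proj | apply: psdD | apply: psdZ].
Qed.

Lemma Efam_diag (z w : 'I_3) : Efam a z (inord w.+2) (inord w.+2) = (z == w)%:R.
Proof.
case: z w => [[|[|[|//]]] ?] [[|[|[|//]]] ?];
  rewrite /Efam /E1 /E2 /E3 /= !projE !mxE !eqxx !andbT -!val_eqE /= !inordK //= !rmorph_nat.
all: by rewrite ?(addr0, subr0, mulr0, mul0r, mulr1, add0r).
Qed.

Lemma LambdaH_Efam z : LambdaH a (Efam a z) = Efam a z.
Proof.
rewrite /LambdaH (eq_bigr (fun w => (z == w)%:R *: Efam a w)) => [|w _].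
  rewrite (bigD1 z) //= eqxx scale1r big1 ?addr0 // => w.
  by rewrite eq_sym => /negbTE ->; rewrite scale0r.
by rewrite /k5 mxtrace_mul_proj_ket Efam_diag.
Qed.

Lemma E2E (i j : 'I_5) :
  E2 a i j = ((val i == 3%N) && (val j == 3%N))%:R + a%:C * ((val i == 1%N) && (val j == 1%N))%:R.
Proof. by rewrite /E2 !projE !mxE !andbT -!val_eqE /= !inordK // !rmorph_nat -!natrM !mulnb. Qed.

Lemma E3E (i j : 'I_5) :
  E3 a i j = ((val i == 4%N) && (val j == 4%N))%:R + (1 - a)%:C * (s * s^* *
    (((val i == 0%N)%:R - (val i == 1%N)%:R) * ((val j == 0%N)%:R - (val j == 1%N)%:R))).
Proof.
rewrite /E3 !projE !mxE !andbT -!val_eqE /= !inordK // !rmorphM !rmorphB !rmorph_nat -!natrM !mulnb.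
by rewrite mulrACA.
Qed.

Lemma E2_E3_noncommute : E2 a *m E3 a != E3 a *m E2 a.
Proof.
(* Column 0 of E2 vanishes, while (E2 E3)_{10} = - a (1 - a) / 2. *)
apply/eqP => /matrixP/(_ (inord 1) (inord 0)).
move: (E2 a) (E3 a) E2E E3E => M2 M3 M2E M3E.
rewrite !mxE !big_ord_recl !big_ord0 !M2E !M3E /= !inordK //= => /eqP; apply/negP.
rewrite -subr_eq0 [X in X == 0](_ : _ = - (a%:C * (1 - a)%:C * (s * s^*))); last by ring.
rewrite oppr_eq0 mulf_eq0 mul_conjC_eq0 mulf_eq0 !fmorph_eq0 invr_eq0 sqrtr_eq0 subr_eq0.
by rewrite (gt_eqF a_gt0) eq_sym (lt_eqF a_lt1) leNgt ltr0n.
Qed.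

End Example.

Theorem mainTheorem5 (R : realType) (a : R) (ha0 : 0 < a) (ha1 : a < 1) :
  POVM (Efam a) /\
  E2 a *m E3 a != E3 a *m E2 a /\
  (forall z : 'I_3, LambdaH a (Efam a z) = Efam a z) /\
  @no_contextuality_proof (R[i] : numClosedFieldType) 5 unit (fun _ => 'I_3)
    (fun _ => Efam a).
Proof.
have povm : POVM (Efam a) by split; [exact: psd_Efam | exact: sum_Efam].
split; first exact: povm.
split; first exact: E2_E3_noncommute.
split; first exact: LambdaH_Efam.
exists 3, (Efam a), (fun l => proj (k5 R l.+2)).
split; first exact: povm.
split; first by move=> l; exact: qstate_proj_ket.
by move=> _ k; rewrite -{1}(@LambdaH_Efam R a k); apply: eq_bigr => l _; rewrite mxtrace_mulC.
Qed.
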